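(* Let $A\in\mathbb{R}^{m\times n}$ be semi-monotone, let $A=P_1-R_1+S_1$ be a double proper weak regular splitting and $A=P_2-R_2+S_2$ a double proper regular splitting of $A$. Suppose $N(R_2)\supseteq N(P_2)$, $R(R_2)\subseteq R(P_2)$, $-1\notin\sigma(R_2P_1^{\dagger})$ and $\widehat{\mathcal{A}}^{\dagger}\geq 0$, where $\widehat{\mathcal{A}}=(I+R_2P_1^{\dagger})A$. If $P_1^{\dagger}R_1\geq P_2^{\dagger}R_2$, $P_2^{\dagger}S_2\geq P_1^{\dagger}S_1$ and $P_2^{\dagger}R_2+P_2^{\dagger}S_2\leq 0$, then $\rho(\mathcal{W}_{12})\leq\rho(T_1)<1$, where $$\mathcal{W}_{12}=\begin{pmatrix} P_2^{\dagger}R_2P_1^{\dagger}R_1-P_2^{\dagger}S_2 & -P_2^{\dagger}R_2P_1^{\dagger}S_1\\ I & 0\end{pmatrix},\qquad T_1=\begin{pmatrix} P_1^{\dagger}R_1 & -P_1^{\dagger}S_1\\ I&0\end{pmatrix}.$$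
   Context: For $M\in\mathbb{R}^{m\times n}$, $M^{\dagger}$ is its Moore–Penrose inverse, $R(M)$, $N(M)$ its range and null space; inequalities are entrywise; $\rho$ is the spectral radius, $\sigma$ the spectrum. $A$ is semi-monotone if $A^{\dagger}\geq0$. A double splitting $A=P-R+S$ is a double proper splitting if $R(P)=R(A)$ and $N(P)=N(A)$; it is double proper regular if moreover $P^{\dagger}\geq0$, $R\geq0$, $S\leq0$; double proper weak regular if moreover $P^{\dagger}\geq 0$, $P^{\dagger}R\geq 0$, $P^{\dagger}S\leq 0$. *)

From HB Require Import structures.
From mathcomp Require Import all_boot all_order all_algebra.
From mathcomp Require Import reals complex.
Set Implicit Arguments. Unset Strict Implicit. Unset Printing Implicit Defensive.
Import Order.TTheory GRing.Theory Num.Theory.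
Local Open Scope ring_scope.

Section Defs.
Variable R : realType.

(* X is the Moore-Penrose inverse of M (the four Penrose equations);
   it exists and is unique, so "M^dagger" is faithfully a binder X with
   hypothesis is_mpinv M X. *)
Definition is_mpinv m n (M : 'M[R]_(m, n)) (X : 'M[R]_(n, m)) : Prop :=
  [/\ M *m X *m M = M, X *m M *m X = X,
      (M *m X)^T = M *m X & (X *m M)^T = X *m M].

Definition mx_le m n (M N : 'M[R]_(m, n)) : Prop := forall i j, M i j <= N i j.

Definition in_range m n (M : 'M[R]_(m, n)) (y : 'cV[R]_m) : Prop :=
  exists x : 'cV[R]_n, y = M *m x.
Definition in_null m n (M : 'M[R]_(m, n)) (x : 'cV[R]_n) : Prop :=
  M *m x = 0.

Definition cmx n (M : 'M[R]_n) : 'M[R[i]]_n := map_mx (fun x => x%:C%C) M.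

Definition in_spectrum n (M : 'M[R]_n) (z : R[i]) : Prop :=
  root (char_poly (cmx M)) z.

Definition eigenvalues n (M : 'M[R]_n) : seq R[i] :=
  sval (closed_field_poly_normal (char_poly (cmx M))).

Definition spectral_radius n (M : 'M[R]_n) : R :=
  \big[Num.max/0]_(z <- eigenvalues M) ComplexField.Normc.normc z.

End Defs.

(** Since A and P1 have the same range and null space, A A^† = P1 P1^† and
    A^† A = P1^† P1.  Hence u = A^† 1 and w = P1^† 1 have the same support and
    P1^† (R1 - S1) u = u - w, so u - w <= c u for some c < 1; with
    a = (1 + c) / 2 the vector (u, u / a) satisfies T1 v <= a v, and a
    Collatz-Wielandt bound for nonnegative vectors whose support contains the
    range of T1^2 gives rho(T1) <= a < 1.
    For the comparison, every t in (rho(T1), 1] admits a positive v with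
    T1 v <= t v, because (t - T1)^-1 stays nonnegative above the spectral
    radius.  The sign conditions P2^† R2 <= P1^† R1 and P1^† S1 <= P2^† S2 <= 0
    turn this into W12 v <= t v, hence rho(W12) <= t. *)

From HB Require Import structures.
From mathcomp Require Import all_boot all_order all_algebra.
From mathcomp Require Import reals complex.
From mathcomp Require Import classical_sets boolp lra.
Import Order.TTheory GRing.Theory Num.Theory.
Local Open Scope ring_scope.
Set Implicit Arguments. Unset Strict Implicit. Unset Printing Implicit Defensive.

Lemma mulmx_row_neq0 (K : pzSemiRingType) m n p (A : 'M[K]_(m, n)) (B : 'M[K]_(n, p)) i j :
  (A *m B) i j != 0 -> exists k, A i k != 0.
Proof.
case: (pickP (fun k => A i k != 0)) => [k Aik _|A0]; first by exists k.
by rewrite mxE big1 ?eqxx // => k _; move/negbFE/eqP: (A0 k) => ->; rewrite mul0r.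
Qed.

Lemma mulmx_cVP (K : pzSemiRingType) m n (M N : 'M[K]_(m, n)) :
  (forall x : 'cV_n, M *m x = N *m x) <-> M = N.
Proof.
split=> [MN | -> //]; apply/matrixP => i j.
by have := congr1 (fun x : 'cV_m => x i 0) (MN (delta_mx j 0)); rewrite -!colE !mxE.
Qed.

Lemma eigenvalue_cV (F : fieldType) n (M : 'M[F]_n) a : eigenvalue M a ->
  exists2 z : 'cV_n, z != 0 & M *m z = a *: z.
Proof.
case/eigenvalueP => v vM v0.
have /det0P[w w0 wM] : \det (a%:M - M)^T == 0.
  by rewrite det_tr; apply/det0P; exists v => //; rewrite mulmxBr vM mul_mx_scalar subrr.
exists w^T; first by rewrite trmx_eq0.
have : (a%:M - M) *m w^T = 0 by rewrite -[LHS]trmxK trmx_mul trmxK wM trmx0.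
by rewrite mulmxBl mul_scalar_mx => /eqP; rewrite subr_eq0 => /eqP <-.
Qed.

Lemma unitmx_ker0 (F : fieldType) n (M : 'M[F]_n) :
  (forall x : 'cV_n, M *m x = 0 -> x = 0) -> M \in unitmx.
Proof.
move=> ker0; rewrite -unitmx_tr unitmxE unitfE; apply/det0P => -[w w0 wM].
have /ker0 /(congr1 trmx) : M *m w^T = 0 by rewrite -[LHS]trmxK trmx_mul trmxK wM trmx0.
by rewrite trmxK trmx0 => w_0; rewrite w_0 eqxx in w0.
Qed.

Section EntrywiseOrder.
Variable R : realType.
Implicit Types m n p : nat.

Lemma mx_le_refl m n (A : 'M[R]_(m, n)) : mx_le A A.
Proof. by move=> i j. Qed.

Lemma mx_le_trans m n (A B C : 'M[R]_(m, n)) : mx_le A B -> mx_le B C -> mx_le A C.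
Proof. by move=> AB BC i j; exact: le_trans (AB i j) (BC i j). Qed.

Lemma mx_leD m n (A B C D : 'M[R]_(m, n)) :
  mx_le A B -> mx_le C D -> mx_le (A + C) (B + D).
Proof. by move=> AB CD i j; rewrite !mxE lerD. Qed.

Lemma mx_ge0E m n (M : 'M[R]_(m, n)) i j : mx_le 0 M -> 0 <= M i j.
Proof. by move/(_ i j); rewrite mxE. Qed.

Lemma mx_leN2 m n (A B : 'M[R]_(m, n)) : mx_le A B -> mx_le (- B) (- A).
Proof. by move=> AB i j; rewrite !mxE lerN2. Qed.

Lemma oppmx_ge0 m n (M : 'M[R]_(m, n)) : mx_le M 0 -> mx_le 0 (- M).
Proof. by move=> M0 i j; have := M0 i j; rewrite !mxE oppr_ge0. Qed.

Lemma mx_le_wpmul2l m n p (M : 'M[R]_(m, n)) (A B : 'M[R]_(n, p)) :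
  mx_le 0 M -> mx_le A B -> mx_le (M *m A) (M *m B).
Proof.
move=> M0 AB i j; rewrite !mxE; apply: ler_sum => k _.
by rewrite ler_wpM2l ?mx_ge0E.
Qed.

Lemma mx_le_wpmul2r m n p (A B : 'M[R]_(m, n)) (M : 'M[R]_(n, p)) :
  mx_le 0 M -> mx_le A B -> mx_le (A *m M) (B *m M).
Proof.
move=> M0 AB i j; rewrite !mxE; apply: ler_sum => k _.
by rewrite ler_wpM2r ?mx_ge0E.
Qed.

Lemma mulmx_ge0 m n p (A : 'M[R]_(m, n)) (B : 'M[R]_(n, p)) :
  mx_le 0 A -> mx_le 0 B -> mx_le 0 (A *m B).
Proof. by move=> A0 B0; rewrite -(mulmx0 _ A); exact: mx_le_wpmul2l. Qed.

Lemma mx_le_wpscale2l m n (c : R) (A B : 'M[R]_(m, n)) :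
  0 <= c -> mx_le A B -> mx_le (c *: A) (c *: B).
Proof. by move=> c0 AB i j; rewrite !mxE ler_wpM2l. Qed.

Lemma scalemx_ge0 m n (c : R) (A : 'M[R]_(m, n)) :
  0 <= c -> mx_le 0 A -> mx_le 0 (c *: A).
Proof. by move=> c0 A0 i j; rewrite !mxE mulr_ge0 ?mx_ge0E. Qed.

Lemma mx_le_wpscale2r m n (c d : R) (A : 'M[R]_(m, n)) :
  mx_le 0 A -> c <= d -> mx_le (c *: A) (d *: A).
Proof. by move=> A0 cd i j; rewrite !mxE ler_wpM2r ?mx_ge0E. Qed.

Lemma const_mx_ge0 m n (c : R) : 0 <= c -> mx_le 0 (const_mx c : 'M[R]_(m, n)).
Proof. by move=> c0 i j; rewrite !mxE. Qed.

Lemma scalar_mx_ge0 n (c : R) : 0 <= c -> mx_le 0 (c%:M : 'M[R]_n).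
Proof. by move=> c0 i j; rewrite !mxE mulrn_wge0. Qed.

Lemma col_mx_le m1 m2 n (A C : 'M[R]_(m1, n)) (B D : 'M[R]_(m2, n)) :
  mx_le (col_mx A B) (col_mx C D) <-> mx_le A C /\ mx_le B D.
Proof.
split=> [le_ABCD | [AC BD] i j].
  by split=> i j; [have := le_ABCD (lshift _ i) j | have := le_ABCD (rshift _ i) j];
    rewrite ?col_mxEu ?col_mxEd.
by case: (split_ordP i) => k ->; rewrite ?col_mxEu ?col_mxEd.
Qed.

Lemma block_mx_ge0 m1 m2 n1 n2 (A : 'M[R]_(m1, n1)) (B : 'M[R]_(m1, n2))
    (C : 'M[R]_(m2, n1)) (D : 'M[R]_(m2, n2)) :
  mx_le 0 A -> mx_le 0 B -> mx_le 0 C -> mx_le 0 D -> mx_le 0 (block_mx A B C D).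
Proof.
move=> A0 B0 C0 D0 i j; rewrite mxE.
by case: (split_ordP i) => k ->; case: (split_ordP j) => l ->;
  rewrite ?block_mxEul ?block_mxEur ?block_mxEdl ?block_mxEdr mx_ge0E.
Qed.

Lemma row_sum_gt0 m n (M : 'M[R]_(m, n)) i k :
  mx_le 0 M -> M i k != 0 -> 0 < (M *m (const_mx 1 : 'cV_n)) i 0.
Proof.
move=> M0 Mik; rewrite mxE (bigD1 k) //= mxE mulr1.
rewrite ltr_wpDr ?sumr_ge0 // => [l _|]; first by rewrite mxE mulr1 mx_ge0E.
by rewrite lt_def Mik mx_ge0E.
Qed.

End EntrywiseOrder.

Section MoorePenrose.
Variable R : realType.
Variables m n : nat.
Implicit Types (A P : 'M[R]_(m, n)) (Ad Pd : 'M[R]_(n, m)).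

Lemma mpinv_range_proj A Ad P : is_mpinv A Ad ->
  (forall y, in_range P y -> in_range A y) -> A *m Ad *m P = P.
Proof.
case=> AAdA _ _ _ PA; apply/mulmx_cVP => x.
have [w Pxw] : in_range A (P *m x) by apply: PA; exists x.
by rewrite -mulmxA Pxw mulmxA AAdA.
Qed.

Lemma mpinv_null_proj A Ad P : is_mpinv A Ad ->
  (forall x, in_null A x -> in_null P x) -> P *m Ad *m A = P.
Proof.
case=> AAdA _ _ _ AP; apply/mulmx_cVP => x; apply/eqP; rewrite eq_sym -subr_eq0.
rewrite -!mulmxA -mulmxBr; apply/eqP/AP.
by rewrite /in_null mulmxBr !mulmxA AAdA subrr.
Qed.

Lemma mpinv_range_eq A Ad P Pd : is_mpinv A Ad -> is_mpinv P Pd ->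
  (forall y, in_range P y <-> in_range A y) -> A *m Ad = P *m Pd.
Proof.
move=> mpA mpP RPA; have [_ _ symA _] := mpA; have [_ _ symP _] := mpP.
have AP : A *m Ad *m (P *m Pd) = P *m Pd.
  by rewrite mulmxA mpinv_range_proj // => y /RPA.
have PA : P *m Pd *m (A *m Ad) = A *m Ad.
  by rewrite mulmxA mpinv_range_proj // => y /RPA.
by rewrite -symA -PA trmx_mul symA symP AP.
Qed.

Lemma mpinv_null_eq A Ad P Pd : is_mpinv A Ad -> is_mpinv P Pd ->
  (forall x, in_null P x <-> in_null A x) -> Ad *m A = Pd *m P.
Proof.
move=> mpA mpP NPA; have [_ _ _ symA] := mpA; have [_ _ _ symP] := mpP.
have AP : Ad *m A *m (Pd *m P) = Ad *m A.
  by rewrite -mulmxA [A *m _]mulmxA mpinv_null_proj // => x /NPA.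
have PA : Pd *m P *m (Ad *m A) = Pd *m P.
  by rewrite -mulmxA [P *m _]mulmxA mpinv_null_proj // => x /NPA.
by rewrite -symA -AP trmx_mul symA symP PA.
Qed.

End MoorePenrose.

Section SpectralRadius.
Variable R : realType.
Local Notation normc := (@ComplexField.Normc.normc R).
Local Open Scope complex_scope.

Lemma mem_eigenvalues n (B : 'M[R]_n) l :
  (l \in eigenvalues B) = root (char_poly (cmx B)) l.
Proof.
rewrite /eigenvalues; case: closed_field_poly_normal => r /= ->.
by rewrite (monicP (char_poly_monic _)) scale1r root_prod_XsubC.
Qed.

Lemma spectral_radius_ge0 n (B : 'M[R]_n) : 0 <= spectral_radius B.
Proof. exact: bigmax_ge_id. Qed.

Lemma spectral_radius_le n (B : 'M[R]_n) a : 0 <= a ->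
  (forall l (z : 'cV_n), z != 0 -> cmx B *m z = l *: z -> normc l <= a) ->
  spectral_radius B <= a.
Proof.
move=> a0 eig_le; rewrite /spectral_radius big_seq_cond; apply: bigmax_le => // l.
rewrite andbT mem_eigenvalues -eigenvalue_root_char => /eigenvalue_cV[z z0 Bz].
exact: eig_le Bz.
Qed.

Lemma spectral_radius_ge n (B : 'M[R]_n) t : 0 <= t ->
  t%:M - B \notin unitmx -> t <= spectral_radius B.
Proof.
move=> t0; rewrite unitmxE unitfE negbK => /det0P[v v0 vB].
have : eigenvalue (cmx B) t%:C.
  rewrite eigenvalue_map; apply/eigenvalueP; exists v => //.
  by move: vB; rewrite mulmxBr mul_mx_scalar => /eqP; rewrite subr_eq0 => /eqP.
rewrite eigenvalue_root_char -mem_eigenvalues => t_eig.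
apply: (bigmax_sup_seq _ _ _ _ _ t_eig) => //.
by rewrite /ComplexField.Normc.normc /= expr0n /= addr0 sqrtr_sqr ger0_norm.
Qed.

Lemma normcE (x : R[i]) : (normc x)%:C = `|x|.
Proof. by []. Qed.

Lemma normc_gt0 (x : R[i]) : (0 < normc x) = (x != 0).
Proof. by rewrite -ltcR normcE normr_gt0. Qed.

Lemma normcR (x : R) : `|x%:C| = `|x|%:C.
Proof. by rewrite normc_def /= expr0n /= addr0 sqrtr_sqr. Qed.

Lemma normc_sum_le n (b : 'I_n -> R) (w : 'I_n -> R[i]) :
  normc (\sum_j (b j)%:C * w j) <= \sum_j `|b j| * normc (w j).
Proof.
rewrite -lecR normcE rmorph_sum; apply: le_trans (ler_norm_sum _ _ _) _.
by apply: ler_sum => j _; rewrite normrM normcR rmorphM.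
Qed.

Lemma eigenvector_support n (B : 'M[R]_n) l (z : 'cV_n) i :
  l != 0 -> cmx B *m z = l *: z -> z i 0 != 0 -> exists j, (B *m B) i j != 0.
Proof.
move=> l0 Bz zi.
have /mulmx_row_neq0[j] : (cmx (B *m B) *m z) i 0 != 0.
  by rewrite /cmx map_mxM -mulmxA -/(cmx B) Bz -scalemxAr Bz scalerA mxE !mulf_neq0.
by rewrite mxE => BBij; exists j; apply: contra BBij => /eqP ->.
Qed.

Lemma normc_eigenvalue_le n (B : 'M[R]_n) (v : 'cV[R]_n) a l (z : 'cV_n) :
  mx_le 0 B -> mx_le 0 v -> mx_le (B *m v) (a *: v) ->
  cmx B *m z = l *: z -> z != 0 -> (forall i, z i 0 != 0 -> 0 < v i 0) ->
  normc l <= a.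
Proof.
move=> B0 v0 Bv Bz z0 zv.
have [i0 zi0] : exists i0, z i0 0 != 0.
  case: (pickP (fun i => z i 0 != 0)) => [i0 zi0 | z_0]; first by exists i0.
  by case/negP: z0; apply/eqP/matrixP => i j; rewrite ord1 mxE; apply/eqP/negbFE.
pose f i := normc (z i 0) / v i 0.
case: (@arg_maxP _ _ _ i0 predT f isT) => k _ fk.
have fk_gt0 : 0 < f k.
  by apply: lt_le_trans (fk i0 isT); rewrite divr_gt0 ?zv ?normc_gt0.
have vk : 0 < v k 0.
  rewrite lt_def mx_ge0E // andbT; apply: contraTneq fk_gt0 => vk0.
  by rewrite /f vk0 invr0 mulr0 ltxx.
have z_le j : normc (z j 0) <= f k * v j 0.
  have [->|zj] := eqVneq (z j 0) 0.
    by rewrite ComplexField.Normc.normc0 mulr_ge0 ?mx_ge0E ?(ltW fk_gt0).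
  by rewrite -ler_pdivrMr ?zv //; exact: fk.
have zk : normc (z k 0) = f k * v k 0 by rewrite /f divfK ?gt_eqF.
have : normc l * normc (z k 0) <= a * normc (z k 0).
  rewrite -ComplexField.Normc.normcM.
  have -> : l * z k 0 = \sum_j (B k j)%:C * z j 0.
    have := congr1 (fun x : 'cV_n => x k 0) Bz; rewrite /= !mxE => <-.
    by apply: eq_bigr => j _; rewrite mxE.
  apply: le_trans (normc_sum_le _ _) _.
  apply: le_trans (_ : \sum_j B k j * (f k * v j 0) <= _).
    by apply: ler_sum => j _; rewrite ger0_norm ?mx_ge0E // ler_wpM2l ?mx_ge0E.
  rewrite zk mulrCA -[\sum_j _](_ : f k * (B *m v) k 0 = _); last first.
    by rewrite mxE mulr_sumr; apply: eq_bigr => j _; rewrite mulrCA.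
  by rewrite ler_wpM2l ?(ltW fk_gt0) //; move: (Bv k 0); rewrite [X in _ <= X]mxE.
by rewrite ler_pM2r // zk mulr_gt0.
Qed.

(* An eigenvector for a nonzero eigenvalue lies in the range of B^2, so the
   last hypothesis puts it inside the support of v. *)
Lemma spectral_radius_le_subinvariant n (B : 'M[R]_n) (v : 'cV[R]_n) a :
  mx_le 0 B -> mx_le 0 v -> 0 <= a -> mx_le (B *m v) (a *: v) ->
  (forall i j, (B *m B) i j != 0 -> 0 < v i 0) -> spectral_radius B <= a.
Proof.
move=> B0 v0 a0 Bv BBv; apply: (spectral_radius_le a0) => l z z0 Bz.
have [->|l0] := eqVneq l 0; first by rewrite ComplexField.Normc.normc0.
apply: (normc_eigenvalue_le B0 v0 Bv Bz z0) => i /(eigenvector_support l0 Bz)[j].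
exact: BBv.
Qed.

End SpectralRadius.

Section ResolventLimit.
Variable R : realType.
Implicit Types m n p : nat.

Definition mx_l1norm m n (M : 'M[R]_(m, n)) : R := \sum_i \sum_j `|M i j|.

Lemma mx_l1norm_ge0 m n (M : 'M[R]_(m, n)) : 0 <= mx_l1norm M.
Proof. by rewrite sumr_ge0 // => i _; rewrite sumr_ge0. Qed.

Lemma mx_l1norm_entry m n (M : 'M[R]_(m, n)) i j : `|M i j| <= mx_l1norm M.
Proof.
rewrite /mx_l1norm (bigD1 i) //= (bigD1 j) //= -addrA lerDl.
by rewrite addr_ge0 ?sumr_ge0 // => k _; rewrite sumr_ge0.
Qed.

Lemma mx_l1normB m n (M N : 'M[R]_(m, n)) :
  mx_l1norm (M - N) <= mx_l1norm M + mx_l1norm N.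
Proof.
rewrite -big_split; apply: ler_sum => i _; rewrite -big_split; apply: ler_sum => j _.
by rewrite !mxE ler_normB.
Qed.

Lemma mx_l1normZ m n (c : R) (M : 'M[R]_(m, n)) :
  mx_l1norm (c *: M) = `|c| * mx_l1norm M.
Proof.
rewrite mulr_sumr; apply: eq_bigr => i _; rewrite mulr_sumr.
by apply: eq_bigr => j _; rewrite mxE normrM.
Qed.

Lemma mx_l1normM m n p (M : 'M[R]_(m, n)) (N : 'M[R]_(n, p)) :
  mx_l1norm (M *m N) <= mx_l1norm M * mx_l1norm N.
Proof.
rewrite mulr_suml; apply: ler_sum => i _; rewrite mulr_suml.
apply: (le_trans (_ : _ <= \sum_j \sum_k `|M i k| * `|N k j|)).
  apply: ler_sum => j _; rewrite mxE; apply: le_trans (ler_norm_sum _ _ _) _.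
  by apply: ler_sum => k _; rewrite normrM.
rewrite exchange_big; apply: ler_sum => k _; rewrite -mulr_sumr ler_wpM2l //.
by rewrite [leRHS](bigD1 k) //= lerDl sumr_ge0 // => l _; rewrite sumr_ge0.
Qed.

Lemma ge0_of_ge_small (x C e : R) : 0 <= C -> 0 < e ->
  (forall d, 0 < d -> d <= e -> - (d * C) <= x) -> 0 <= x.
Proof.
move=> C0 e0 x_ge; apply/ler_addgt0Pr => eps eps0.
pose d := Num.min e (eps / (C + 1)).
have d0 : 0 < d by rewrite lt_min e0 divr_gt0 // ltr_wpDl.
have dC : d * C <= eps.
  have dle : d <= eps / (C + 1) by rewrite ge_min lexx orbT.
  apply: le_trans (_ : eps / (C + 1) * C <= _); first by rewrite ler_wpM2r.
  by rewrite mulrAC ler_pdivrMr ?ltr_wpDl // ler_wpM2l ?lerDl ?(ltW eps0).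
have de : d <= e by rewrite ge_min lexx.
by rewrite -lerBlDr sub0r (le_trans _ (x_ge d d0 de)) ?lerN2.
Qed.

Lemma resolvent_identity n (M : 'M[R]_n) d : M \in unitmx -> M + d%:M \in unitmx ->
  invmx M = invmx (M + d%:M) + d *: (invmx M *m invmx (M + d%:M)).
Proof.
move=> Mu Mdu; rewrite scalemxAl -[X in X + _]mul1mx -mulmxDl.
have <- : invmx M *m (M + d%:M) = 1%:M + d *: invmx M.
  by rewrite mulmxDr mulVmx // mul_mx_scalar.
by rewrite -mulmxA mulmxV ?mulmx1.
Qed.

(* For small d the resolvent identity G = G_d + d G G_d bounds |G_d| by 2 |G|,
   so G >= - 2 d |G|^2 entrywise. *)
Lemma invmx_ge0_limit n (M : 'M[R]_n) : M \in unitmx ->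
  (forall d, 0 < d -> M + d%:M \in unitmx /\ mx_le 0 (invmx (M + d%:M))) ->
  mx_le 0 (invmx M).
Proof.
move=> Mu near_ge0; set G := invmx M; set g := mx_l1norm G.
have g0 : 0 <= g := mx_l1norm_ge0 G.
have Gd_le d : 0 < d -> d * g <= 1 / 2 -> mx_l1norm (invmx (M + d%:M)) <= 2 * g.
  move=> d0 dg; have [Mdu _] := near_ge0 d d0; set Gd := invmx (M + d%:M).
  have GE : G = Gd + d *: (G *m Gd) := resolvent_identity Mu Mdu.
  have : mx_l1norm Gd <= g + d * (g * mx_l1norm Gd).
    have {1}-> : Gd = G - d *: (G *m Gd) by rewrite {1}GE addrK.
    apply: le_trans (mx_l1normB _ _) _; rewrite mx_l1normZ ger0_norm ?(ltW d0) //.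
    by rewrite lerD2l ler_wpM2l ?(ltW d0) ?mx_l1normM.
  have := mx_l1norm_ge0 Gd; rewrite mulrA; nra.
move=> i j; rewrite mxE.
apply: (@ge0_of_ge_small _ (2 * g ^+ 2) (1 / (2 * g + 1))) => [||d d0 dle].
- by rewrite mulr_ge0 ?sqr_ge0.
- by rewrite divr_gt0 // ltr_wpDl ?mulr_ge0.
have [Mdu Gd0] := near_ge0 d d0; set Gd := invmx (M + d%:M) in Gd0 *.
have dg : d * g <= 1 / 2.
  move: dle; rewrite ler_pdivlMr ?ltr_wpDl ?mulr_ge0 // => dle; nra.
rewrite [G](resolvent_identity Mu Mdu) mxE [X in _ + X]mxE.
apply: le_trans (_ : d * (G *m Gd) i j <= _); last by rewrite lerDr mx_ge0E.
rewrite -mulrN ler_wpM2l ?(ltW d0) //.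
apply: le_trans (_ : - `|(G *m Gd) i j| <= _); last by rewrite lerNl -normrN ler_norm.
rewrite lerN2; apply: le_trans (mx_l1norm_entry _ _ _) _.
apply: le_trans (mx_l1normM _ _) _.
by rewrite -/g expr2 mulrCA ler_wpM2l ?Gd_le.
Qed.

End ResolventLimit.

Section PositiveSubinvariance.
Variable R : realType.
Variables (n : nat) (B : 'M[R]_n).

Definition positive_subinvariant (s : R) := exists2 v : 'cV[R]_n,
  forall i, 0 < v i 0 & forall i, (B *m v) i 0 < s * v i 0.

Lemma positive_subinvariant_le s s' :
  positive_subinvariant s -> s <= s' -> positive_subinvariant s'.
Proof.
case=> v v0 Bv ss'; exists v => // i.
by apply: lt_le_trans (Bv i) _; rewrite ler_wpM2r ?(ltW (v0 i)).
Qed.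

Hypothesis B0 : mx_le 0 B.

Lemma positive_subinvariant_large : exists s, positive_subinvariant s.
Proof.
exists (1 + \sum_i \sum_j B i j); exists (const_mx 1) => i; first by rewrite mxE.
rewrite !mxE mulr1 ltr_pwDl //; apply: le_trans (_ : _ <= \sum_j B i j) _.
  by apply: ler_sum => j _; rewrite mxE mulr1.
rewrite [leRHS](bigD1 i) //= lerDl sumr_ge0 // => k _.
by apply: sumr_ge0 => j _; exact: mx_ge0E.
Qed.

Lemma positive_subinvariant_monotone s p (x : 'M[R]_(n, p)) :
  positive_subinvariant s -> mx_le 0 ((s%:M - B) *m x) -> mx_le 0 x.
Proof.
case=> v v0 Bv Dx i j; rewrite mxE.
pose f k := x k j / v k 0.
case: (@arg_minP _ _ _ i predT f isT) => k _ fk.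
have x_ge l : f k * v l 0 <= x l j by rewrite -ler_pdivlMr ?fk.
suff fk0 : 0 <= f k by apply: le_trans (x_ge i); rewrite mulr_ge0 ?(ltW (v0 i)).
rewrite leNgt; apply/negP => fk_lt0.
have : 0 <= s * x k j - (B *m x) k j by move: (Dx k j); rewrite mulmxBl mul_scalar_mx !mxE.
rewrite subr_ge0 leNgt => /negP; apply.
apply: lt_le_trans (_ : f k * (B *m v) k 0 <= _).
  by rewrite (_ : s * x k j = f k * (s * v k 0)) ?ltr_nM2l // /f mulrCA divfK ?gt_eqF.
rewrite mxE [X in _ <= X]mxE mulr_sumr; apply: ler_sum => l _.
by rewrite mulrCA ler_wpM2l ?mx_ge0E.
Qed.

Lemma positive_subinvariant_unit s : positive_subinvariant s -> s%:M - B \in unitmx.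
Proof.
move=> Ps; apply: unitmx_ker0 => x Dx0.
have x_ge0 : mx_le 0 x by apply: positive_subinvariant_monotone Ps _; rewrite Dx0.
have Nx_ge0 : mx_le 0 (- x).
  by apply: positive_subinvariant_monotone Ps _; rewrite mulmxN Dx0 oppr0.
apply/matrixP => i j; move: (x_ge0 i j) (Nx_ge0 i j); rewrite !mxE oppr_ge0.
by move=> x_ge x_le; apply/eqP; rewrite eq_le x_le x_ge.
Qed.

Lemma positive_subinvariant_invmx_ge0 s :
  positive_subinvariant s -> mx_le 0 (invmx (s%:M - B)).
Proof.
move=> Ps; apply: (positive_subinvariant_monotone Ps).
by rewrite mulmxV ?positive_subinvariant_unit //; apply: scalar_mx_ge0.
Qed.

Lemma positive_subinvariant_open s : s%:M - B \in unitmx ->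
  mx_le 0 (invmx (s%:M - B)) -> exists2 e, 0 < e & positive_subinvariant (s - e).
Proof.
move=> Du G0; set G := invmx _ in G0.
pose v := G *m (const_mx 1 : 'cV_n).
have v0 : mx_le 0 v := mulmx_ge0 G0 (const_mx_ge0 ler01).
have Bv i : (B *m v) i 0 = s * v i 0 - 1.
  have -> : B *m v = s *: v - const_mx 1.
    by rewrite -[const_mx 1](mulKVmx Du) -/G -/v mulmxBl mul_scalar_mx opprB addrC subrK.
  by rewrite !mxE.
have v_gt0 i : 0 < v i 0.
  rewrite lt_def mx_ge0E // andbT; apply: contraTneq (mx_ge0E i 0 (mulmx_ge0 B0 v0)).
  by move=> vi0; rewrite Bv vi0 mulr0 sub0r oppr_ge0 -ltNge ltr01.
pose e := 1 / (1 + \sum_i v i 0).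
have sv0 : 0 < 1 + \sum_i v i 0 by rewrite ltr_pwDl ?sumr_ge0 // => i _; exact: ltW.
exists e; first by rewrite divr_gt0.
exists v => // i; rewrite Bv mulrBl ltrD2l ltrN2 /e mul1r mulrC ltr_pdivrMr // mul1r.
by rewrite ltr_pwDl // (bigD1 i) //= lerDl sumr_ge0 // => j _; exact: ltW.
Qed.

(* Otherwise the infimum of the s admitting a positive subinvariant vector is
   a regular point of B where, by continuity, the resolvent is still
   nonnegative; it then yields such a vector for a slightly smaller s. *)
Lemma spectral_radius_lt_positive_subinvariant t :
  spectral_radius B < t -> positive_subinvariant t.
Proof.
move=> rho_t; apply: contrapT => not_Pt.
pose S : set R := positive_subinvariant.
have t_lb : lbound S t.
  move=> s Ps; rewrite leNgt; apply/negP => st; apply: not_Pt.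
  exact: positive_subinvariant_le Ps (ltW st).
have [s0 Ps0] := positive_subinvariant_large.
have S_inf : has_inf S by split; [exists s0 | exists t].
have t_inf : t <= inf S by apply: lb_le_inf; first by exists s0.
have inf_ge0 : 0 <= inf S.
  exact: le_trans (ltW (le_lt_trans (spectral_radius_ge0 B) rho_t)) t_inf.
have inf_unit : (inf S)%:M - B \in unitmx.
  apply/negPn/negP => /(spectral_radius_ge inf_ge0) inf_rho.
  by have := lt_le_trans (le_lt_trans inf_rho rho_t) t_inf; rewrite ltxx.
have inf_inv_ge0 : mx_le 0 (invmx ((inf S)%:M - B)).
  apply: invmx_ge0_limit inf_unit _ => d d0.
  have [e Se e_lt] := inf_adherent d0 S_inf.
  have Pd := positive_subinvariant_le Se (ltW e_lt).
  rewrite addrAC -raddfD /=.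
  by split; [exact: positive_subinvariant_unit | exact: positive_subinvariant_invmx_ge0].
have [e e0 Pe] := positive_subinvariant_open inf_unit inf_inv_ge0.
have := ge_inf (ex_intro _ t t_lb) Pe.
by rewrite lerBrDr gerDl leNgt e0.
Qed.

End PositiveSubinvariance.

Lemma spectral_radius_comparison (R : realType) n (T W : 'M[R]_n) :
  mx_le 0 T -> mx_le 0 W -> spectral_radius T < 1 ->
  (forall a (v : 'cV_n), 0 <= a -> a <= 1 -> mx_le 0 v ->
     mx_le (T *m v) (a *: v) -> mx_le (W *m v) (a *: v)) ->
  spectral_radius W <= spectral_radius T.
Proof.
move=> T0 W0 rhoT1 TW; apply/ler_addgt0Pr => e e0.
pose t := Num.min (spectral_radius T + e) 1.
have rhoT_t : spectral_radius T < t by rewrite lt_min ltrDl e0.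
have t0 : 0 <= t := le_trans (spectral_radius_ge0 T) (ltW rhoT_t).
have [v v0 Tv] := spectral_radius_lt_positive_subinvariant T0 rhoT_t.
have v_ge0 : mx_le 0 v by move=> i j; rewrite ord1 mxE (ltW (v0 i)).
have Wv : mx_le (W *m v) (t *: v).
  apply: TW => //; first by rewrite ge_min lexx orbT.
  by move=> i j; rewrite ord1 [X in _ <= X]mxE (ltW (Tv i)).
apply: le_trans (spectral_radius_le_subinvariant W0 v_ge0 t0 Wv _) _.
  by move=> i *; exact: v0.
by rewrite ge_min lexx.
Qed.

Section Companion.
Variable R : realType.
Variable n : nat.
Implicit Types X Y K L : 'M[R]_n.

(* The iteration matrix of x_(k+1) = X x_k - Y x_(k-1); T1 is
   companion (P1^† R1) (P1^† S1). *)
Definition companion X Y : 'M[R]_(n + n) := block_mx X (- Y) 1%:M 0.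

Lemma companion_ge0 X Y : mx_le 0 X -> mx_le Y 0 -> mx_le 0 (companion X Y).
Proof.
by move=> X0 Y0; apply: block_mx_ge0 => //; [exact: oppmx_ge0 | exact: scalar_mx_ge0].
Qed.

Lemma companion_mulmx_col X Y (x y : 'cV[R]_n) :
  companion X Y *m col_mx x y = col_mx (X *m x - Y *m y) x.
Proof. by rewrite mul_block_col mul1mx mul0mx addr0 mulNmx. Qed.

Lemma companion_subinvariant X Y (u : 'cV[R]_n) c a :
  mx_le 0 X -> mx_le Y 0 -> mx_le 0 u -> mx_le ((X - Y) *m u) (c *: u) ->
  0 < a -> a <= 1 -> c <= a * a ->
  mx_le (companion X Y *m col_mx u (a^-1 *: u)) (a *: col_mx u (a^-1 *: u)).
Proof.
move=> X0 Y0 u0 XYu a0 a1 ca.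
rewrite companion_mulmx_col scale_col_mx scalerA divff ?gt_eqF // scale1r.
apply/col_mx_le; split=> [|i j]; last exact: lexx.
have a1V : 1 <= a^-1 by rewrite invf_ge1.
apply: (@mx_le_trans _ _ _ _ (a^-1 *: ((X - Y) *m u))).
  rewrite mulmxBl scalerBr -scalemxAr; apply: mx_leD.
    by rewrite -{1}[X *m u]scale1r; apply: mx_le_wpscale2r; first exact: mulmx_ge0.
  by move=> i j; rewrite !mxE.
apply: mx_le_trans (mx_le_wpscale2l _ XYu) _; first by rewrite invr_ge0 (ltW a0).
rewrite scalerA; apply: mx_le_wpscale2r => //.
by rewrite ler_pdivrMl // mulrA.
Qed.

Lemma companion_sqr_support p (D : 'M[R]_(n, p)) (X Y : 'M[R]_(p, n))
    (u : 'cV[R]_n) b :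
  (forall i k, D i k != 0 -> 0 < u i 0) -> 0 < b ->
  forall i j, (companion (D *m X) (D *m Y) *m companion (D *m X) (D *m Y)) i j != 0 ->
    0 < col_mx u (b *: u) i 0.
Proof.
move=> Du b0 i j.
have -> : companion (D *m X) (D *m Y) *m companion (D *m X) (D *m Y) =
    block_mx D 0 0 D *m block_mx (X *m D *m X - Y) (- (X *m D *m Y)) X (- Y).
  rewrite /companion !mulmx_block; congr block_mx;
    by rewrite ?(mulmx0, mul0mx, mulmx1, mul1mx, addr0, add0r, mulmxBr, mulmxN, mulNmx, mulmxA).
case/mulmx_row_neq0 => k; case: (split_ordP i) => i' ->; case: (split_ordP k) => k' ->;
  rewrite ?block_mxEul ?block_mxEur ?block_mxEdl ?block_mxEdr ?col_mxEu ?col_mxEd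
    ?mxE ?eqxx // => Dik; rewrite ?mulr_gt0 //; exact: Du Dik.
Qed.

Lemma companion_comparison X Y K L (v : 'cV[R]_(n + n)) a :
  mx_le 0 K -> mx_le K X -> mx_le Y L -> mx_le L 0 ->
  0 <= a -> a <= 1 -> mx_le 0 v ->
  mx_le (companion X Y *m v) (a *: v) ->
  mx_le (companion (K *m X - L) (K *m Y) *m v) (a *: v).
Proof.
move=> K0 KX YL L0 a0 a1; rewrite -[v]vsubmxK; set x := usubmx v; set y := dsubmx v.
rewrite -col_mx0 !companion_mulmx_col scale_col_mx => /col_mx_le[x0 y0] /col_mx_le[Tx Ty].
apply/col_mx_le; split=> //.
have Y0 : mx_le Y 0 := mx_le_trans YL L0.
have -> : (K *m X - L) *m x - K *m Y *m y = K *m (X *m x - Y *m y) - L *m x.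
  by rewrite mulmxBr mulmxBl !mulmxA addrAC.
apply: (@mx_le_trans _ _ _ _ (a *: (K *m x) - L *m x)).
  by apply: mx_leD (mx_le_refl _); rewrite scalemxAr; exact: mx_le_wpmul2l.
apply: (@mx_le_trans _ _ _ _ (a *: (X *m x) - Y *m x)).
  apply: mx_leD; first by apply: mx_le_wpscale2l => //; exact: mx_le_wpmul2r.
  by rewrite -!mulNmx; apply: mx_le_wpmul2r => //; exact: mx_leN2.
apply: (@mx_le_trans _ _ _ _ (a *: (X *m x) - Y *m (a *: y))).
  apply: mx_leD (mx_le_refl _) _; rewrite -!mulNmx.
  by apply: mx_le_wpmul2l => //; exact: oppmx_ge0.
rewrite -scalemxAr -scalerBr; apply: mx_le_trans (mx_le_wpscale2l a0 Tx) _.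
by rewrite scalerA; apply: mx_le_wpscale2r => //; rewrite -[leRHS]mul1r ler_wpM2r.
Qed.

End Companion.

Lemma contraction_factor (R : realType) n (u w : 'cV[R]_n) :
  mx_le 0 u -> mx_le 0 w -> (forall i, 0 < u i 0 -> 0 < w i 0) ->
  exists2 c, 0 <= c < 1 & mx_le (u - w) (c *: u).
Proof.
move=> u0 w0 uw; pose c := \big[Num.max/0]_i ((u i 0 - w i 0) / u i 0).
exists c.
  rewrite bigmax_ge_id /=; apply: bigmax_lt => // i _.
  have [->|ui] := eqVneq (u i 0) 0; first by rewrite invr0 mulr0.
  have ui_gt0 : 0 < u i 0 by rewrite lt_def ui mx_ge0E.
  by rewrite ltr_pdivrMr // mul1r ltrBlDr ltrDl uw.
move=> i j; rewrite ord1 !mxE; have [ui0|ui] := eqVneq (u i 0) 0.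
  by rewrite ui0 mulr0 sub0r oppr_le0 mx_ge0E.
rewrite -ler_pdivrMr ?lt_def ?ui ?mx_ge0E //.
exact: (le_bigmax _ (fun i => (u i 0 - w i 0) / u i 0) i).
Qed.

Section ProperSplitting.
Variable R : realType.
Variables (m n : nat) (A P : 'M[R]_(m, n)) (Ad Pd : 'M[R]_(n, m)).
Hypotheses (mpA : is_mpinv A Ad) (mpP : is_mpinv P Pd).
Hypotheses (rangeP : forall y, in_range P y <-> in_range A y)
           (nullP : forall x, in_null P x <-> in_null A x).

Lemma proper_mpinvAE : Ad = Pd *m (P *m Ad).
Proof.
have [_ AdAAd _ _] := mpA.
by rewrite mulmxA -(mpinv_null_eq mpA mpP nullP) AdAAd.
Qed.

Lemma proper_mpinvPE : Pd = Ad *m (A *m Pd).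
Proof.
have [_ PdPPd _ _] := mpP.
by rewrite mulmxA (mpinv_null_eq mpA mpP nullP) PdPPd.
Qed.

Lemma proper_mpinv_diff : Pd *m (P - A) *m Ad = Ad - Pd.
Proof.
have [_ AdAAd _ _] := mpA; have [_ PdPPd _ _] := mpP.
rewrite mulmxBr mulmxBl -(mpinv_null_eq mpA mpP nullP) AdAAd.
by rewrite -mulmxA (mpinv_range_eq mpA mpP rangeP) mulmxA PdPPd.
Qed.

Hypotheses (Ad0 : mx_le 0 Ad) (Pd0 : mx_le 0 Pd).

Lemma weak_regular_splitting_convergent (N S : 'M[R]_(m, n)) :
  A = P - N + S -> mx_le 0 (Pd *m N) -> mx_le (Pd *m S) 0 ->
  spectral_radius (companion (Pd *m N) (Pd *m S)) < 1.
Proof.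
move=> eA X0 Y0.
pose u := Ad *m (const_mx 1 : 'cV_m); pose w := Pd *m (const_mx 1 : 'cV_m).
have u0 : mx_le 0 u := mulmx_ge0 Ad0 (const_mx_ge0 ler01).
have w0 : mx_le 0 w := mulmx_ge0 Pd0 (const_mx_ge0 ler01).
have Pd_u i k : Pd i k != 0 -> 0 < u i 0.
  by rewrite {1}proper_mpinvPE => /mulmx_row_neq0[l]; exact: row_sum_gt0.
have u_w i : 0 < u i 0 -> 0 < w i 0.
  rewrite /u proper_mpinvAE -mulmxA => /gt_eqF/negbT/mulmx_row_neq0[k].
  exact: row_sum_gt0.
have [c /andP[c0 c1] cu] := contraction_factor u0 w0 u_w.
pose a := (1 + c) / 2.
have a0 : 0 < a by rewrite /a; lra.
have a1 : a < 1 by rewrite /a; lra.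
have ca : c <= a * a by rewrite /a; nra.
have XYu : (Pd *m N - Pd *m S) *m u = u - w.
  rewrite -mulmxBr (_ : N - S = P - A); last first.
    by rewrite eA opprD opprB addrA addrCA subrr addr0.
  by rewrite mulmxA proper_mpinv_diff mulmxBl.
apply: (le_lt_trans _ a1).
apply: (spectral_radius_le_subinvariant (v := col_mx u (a^-1 *: u))).
- exact: companion_ge0.
- rewrite -col_mx0; apply/col_mx_le; split=> //.
  by apply: scalemx_ge0 u0; rewrite invr_ge0 (ltW a0).
- exact: ltW a0.
- by apply: companion_subinvariant (ltW a1) ca; rewrite ?XYu.
- by apply: companion_sqr_support Pd_u _; rewrite invr_gt0.
Qed.

End ProperSplitting.

Theorem theorem3p16 (R : realType) (m n : nat)
  (A P1 R1 S1 P2 R2 S2 : 'M[R]_(m, n))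
  (Ad P1d P2d : 'M[R]_(n, m)) (Ahatd : 'M[R]_(n, m)) :
  (* Moore-Penrose inverses *)
  is_mpinv A Ad -> is_mpinv P1 P1d -> is_mpinv P2 P2d ->
  (* A semi-monotone *)
  mx_le 0 Ad ->
  (* A = P1 - R1 + S1 : double proper weak regular splitting *)
  A = P1 - R1 + S1 ->
  (forall y, in_range P1 y <-> in_range A y) ->
  (forall x, in_null P1 x <-> in_null A x) ->
  mx_le 0 P1d -> mx_le 0 (P1d *m R1) -> mx_le (P1d *m S1) 0 ->
  (* A = P2 - R2 + S2 : double proper regular splitting *)
  A = P2 - R2 + S2 ->
  (forall y, in_range P2 y <-> in_range A y) ->
  (forall x, in_null P2 x <-> in_null A x) ->
  mx_le 0 P2d -> mx_le 0 R2 -> mx_le S2 0 ->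
  (* N(R2) ⊇ N(P2), R(R2) ⊆ R(P2) *)
  (forall x, in_null P2 x -> in_null R2 x) ->
  (forall y, in_range R2 y -> in_range P2 y) ->
  (* -1 not in the spectrum of R2 P1^† *)
  ~ in_spectrum (R2 *m P1d) (-1) ->
  (* (I + R2 P1^†) A has a nonnegative Moore-Penrose inverse *)
  is_mpinv ((1%:M + R2 *m P1d) *m A) Ahatd -> mx_le 0 Ahatd ->
  mx_le (P2d *m R2) (P1d *m R1) ->
  mx_le (P1d *m S1) (P2d *m S2) ->
  mx_le (P2d *m R2 + P2d *m S2) 0 ->
  let W12 : 'M[R]_(n + n) :=
    block_mx (P2d *m R2 *m P1d *m R1 - P2d *m S2) (- (P2d *m R2 *m P1d *m S1))
             1%:M 0 in
  let T1 : 'M[R]_(n + n) :=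
    block_mx (P1d *m R1) (- (P1d *m S1)) 1%:M 0 in
  spectral_radius W12 <= spectral_radius T1 /\ spectral_radius T1 < 1.
Proof.
move=> mpA mpP1 _ Ad0 eA rP1 nP1 P1d0 X0 Y0 _ _ _ P2d0 R20 S20 _ _ _ _ _ KX YL _ W12 T1.
set X := P1d *m R1; set Y := P1d *m S1; set K := P2d *m R2; set L := P2d *m S2.
have eT1 : T1 = companion X Y by [].
have eW12 : W12 = companion (K *m X - L) (K *m Y) by rewrite /W12 /companion !mulmxA.
have K0 : mx_le 0 K := mulmx_ge0 P2d0 R20.
have L0 : mx_le L 0 by rewrite -(mulmx0 _ P2d); exact: mx_le_wpmul2l.
have rhoT1 : spectral_radius T1 < 1.
  exact: weak_regular_splitting_convergent mpA mpP1 rP1 nP1 Ad0 P1d0 R1 S1 eA X0 Y0.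
split; last exact: rhoT1.
rewrite eT1 eW12 in rhoT1 *.
apply: spectral_radius_comparison rhoT1 _ => [||a v a0 a1 v0].
- exact: companion_ge0.
- apply: companion_ge0; last by rewrite -(mulmx0 _ K); exact: mx_le_wpmul2l.
  by rewrite -[0](subr0 0); apply: mx_leD; [exact: mulmx_ge0 | exact: mx_leN2].
- exact: companion_comparison.
Qed.
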